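(* Let $A$ and $B$ be pure parabolic isometries of $\mathbb{H}^4$. Then $A$ and $B$ are linked.
   Context: A pure parabolic isometry of $\mathbb{H}^4$ is a composition of reflections in two hyperplanes tangent at a unique point at infinity. Two isometries $A,B$ are linked if there are involutions $\alpha,\beta,\gamma$ of $\mathbb{H}^4$ with $A=\alpha\beta$ and $B=\beta\gamma$. *)

(* hyperboloid model of H^4 in Minkowski space R^{4,1}. *)
From HB Require Import structures.
From mathcomp Require Import all_boot all_order all_algebra.
From mathcomp Require Import reals.
Set Implicit Arguments. Unset Strict Implicit. Unset Printing Implicit Defensive.
Import Order.TTheory GRing.Theory Num.Theory.
Local Open Scope ring_scope.

Section Hyp.
Variable R : realType.

(* coordinates 0..3 are spacelike, coordinate 4 (= ord_max) is timelike *)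
Definition tidx : 'I_5 := ord_max.

Definition lorJ : 'M[R]_5 :=
  diag_mx (\row_(i < 5) (if i == tidx then -1 else 1)).

Definition lor (x y : 'cV[R]_5) : R := (x^T *m lorJ *m y) 0 0.

Definition hpoint (x : 'cV[R]_5) : Prop := lor x x = -1 /\ 0 < x tidx 0.

(* representatives of points at infinity: nonzero future-directed null vectors
   (two representatives give the same ideal point iff positively proportional) *)
Definition ideal_rep (v : 'cV[R]_5) : Prop := lor v v = 0 /\ 0 < v tidx 0.

(* isometries of H^4 : the group O^+(4,1) acting linearly *)
Definition isometry (A : 'M[R]_5) : Prop :=
  A^T *m lorJ *m A = lorJ /\ 0 < A tidx tidx.

Definition involution (A : 'M[R]_5) : Prop :=
  isometry A /\ A *m A = 1%:M /\ A <> 1%:M.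

(* a hyperplane of H^4 is given by a unit spacelike normal n :
   P_n = { x in H^4 | <x,n> = 0 }; its reflection is x |-> x - 2 <x,n> n *)
Definition unit_spacelike (n : 'cV[R]_5) : Prop := lor n n = 1.

Definition refl (n : 'cV[R]_5) : 'M[R]_5 :=
  1%:M - 2%:R *: (n *m n^T *m lorJ).

Definition tangent_at_infinity (n m : 'cV[R]_5) : Prop :=
  (forall x, hpoint x -> ~ (lor x n = 0 /\ lor x m = 0)) /\
  exists v, [/\ ideal_rep v, lor v n = 0, lor v m = 0 &
    forall w, ideal_rep w -> lor w n = 0 -> lor w m = 0 ->
      exists2 c : R, 0 < c & w = c *: v].

Definition pure_parabolic (A : 'M[R]_5) : Prop :=
  exists n m, [/\ unit_spacelike n, unit_spacelike m,
    tangent_at_infinity n m & A = refl n *m refl m].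

Definition linked (A B : 'M[R]_5) : Prop :=
  exists a b c, [/\ involution a, involution b, involution c,
    A = a *m b & B = b *m c].

End Hyp.

From Pilot Require Import Defs.
From HB Require Import structures.
From mathcomp Require Import all_boot all_order all_algebra.
From mathcomp Require Import reals.
From mathcomp Require Import ring lra.
Set Implicit Arguments. Unset Strict Implicit. Unset Printing Implicit Defensive.
Import Order.TTheory GRing.Theory Num.Theory.
Local Open Scope ring_scope.

(* If the hyperplanes with unit normals n and m are tangent at the ideal point
   of the null vector v, then m = +-(n + g v) with <n, v> = 0, so
   A = r_n r_(n + g v), and r_(n + a v) r_(n + c v) depends only on c - a.
   A half-turn b whose axis ends at v fixes v and acts as -1 on v^perp / R v;
   since b r_x b = r_(b x), conjugating by b sends A to r_(n + s v) r_(n + (s - g) v)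
   for some s, i.e. to A^-1, so A b is an involution.  Taking the axis of b
   through the fixed points at infinity of A and B (or through the common fixed
   point and its antipode) makes both A b and b B involutions, and then
   A = (A b) b and B = b (b B). *)

Section Lorentz.
Variable R : realType.
Implicit Types (x y z u v w n m : 'cV[R]_5) (b X Y : 'M[R]_5).

Local Notation J := (lorJ R).

(** * The Lorentzian form *)

Definition o0 : 'I_5 := @Ordinal 5 0 isT.
Definition o1 : 'I_5 := @Ordinal 5 1 isT.
Definition o2 : 'I_5 := @Ordinal 5 2 isT.
Definition o3 : 'I_5 := @Ordinal 5 3 isT.

Lemma sum_ord5 (F : 'I_5 -> R) :
  \sum_(i < 5) F i = F o0 + F o1 + F o2 + F o3 + F tidx.
Proof.
rewrite !big_ord_recr big_ord0 /= add0r.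
by congr (_ + _ + _ + _ + _); congr F; apply: val_inj.
Qed.

Lemma col5P x y : x o0 0 = y o0 0 -> x o1 0 = y o1 0 -> x o2 0 = y o2 0 ->
  x o3 0 = y o3 0 -> x tidx 0 = y tidx 0 -> x = y.
Proof.
move=> h0 h1 h2 h3 ht; apply/matrixP => i j; rewrite [j]ord1.
case: i => [[|[|[|[|[|k]]]]] Hi] //.
- by rewrite (_ : Ordinal Hi = o0) //; apply: val_inj.
- by rewrite (_ : Ordinal Hi = o1) //; apply: val_inj.
- by rewrite (_ : Ordinal Hi = o2) //; apply: val_inj.
- by rewrite (_ : Ordinal Hi = o3) //; apply: val_inj.
- by rewrite (_ : Ordinal Hi = tidx) //; apply: val_inj.
Qed.

Definition spatial_dot x y : R :=
  x o0 0 * y o0 0 + x o1 0 * y o1 0 + x o2 0 * y o2 0 + x o3 0 * y o3 0.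

Lemma lorE x y : lor x y = spatial_dot x y - x tidx 0 * y tidx 0.
Proof. by rewrite /lor /lorJ mul_mx_diag !mxE sum_ord5 !mxE /= /spatial_dot; ring. Qed.

Lemma lorC x y : lor x y = lor y x.
Proof. by rewrite !lorE /spatial_dot; ring. Qed.

Lemma lorDl x y z : lor (x + y) z = lor x z + lor y z.
Proof. by rewrite !lorE /spatial_dot !mxE; ring. Qed.

Lemma lorDr x y z : lor x (y + z) = lor x y + lor x z.
Proof. by rewrite !lorE /spatial_dot !mxE; ring. Qed.

Lemma lorZl (s : R) x y : lor (s *: x) y = s * lor x y.
Proof. by rewrite !lorE /spatial_dot !mxE; ring. Qed.

Lemma lorZr (s : R) x y : lor x (s *: y) = s * lor x y.
Proof. by rewrite !lorE /spatial_dot !mxE; ring. Qed.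

Lemma lorNl x y : lor (- x) y = - lor x y.
Proof. by rewrite !lorE /spatial_dot !mxE; ring. Qed.

Lemma lorBl x y z : lor (x - y) z = lor x z - lor y z.
Proof. by rewrite !lorE /spatial_dot !mxE; ring. Qed.

Lemma spatial_dot_ge0 x : 0 <= spatial_dot x x.
Proof. by rewrite /spatial_dot -!expr2 !addr_ge0 ?sqr_ge0. Qed.

Lemma spatial_dot_cauchy_schwarz x y : spatial_dot x y ^+ 2 <= spatial_dot x x * spatial_dot y y.
Proof.
rewrite -subr_ge0 /spatial_dot.
set a0 := x o0 0; set a1 := x o1 0; set a2 := x o2 0; set a3 := x o3 0.
set b0 := y o0 0; set b1 := y o1 0; set b2 := y o2 0; set b3 := y o3 0.
have -> : (a0*a0 + a1*a1 + a2*a2 + a3*a3) * (b0*b0 + b1*b1 + b2*b2 + b3*b3)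
  - (a0*b0 + a1*b1 + a2*b2 + a3*b3) ^+ 2 =
  (a0*b1-a1*b0)^+2 + (a0*b2-a2*b0)^+2 + (a0*b3-a3*b0)^+2
  + (a1*b2-a2*b1)^+2 + (a1*b3-a3*b1)^+2 + (a2*b3-a3*b2)^+2 by ring.
by rewrite !addr_ge0 ?sqr_ge0.
Qed.

Lemma spatial_time_eq0 x : spatial_dot x x = 0 -> x tidx 0 = 0 -> x = 0.
Proof.
rewrite /spatial_dot => h ht; have := sqr_ge0 (x o0 0); have := sqr_ge0 (x o1 0).
have := sqr_ge0 (x o2 0); have := sqr_ge0 (x o3 0); rewrite !expr2 => *.
by apply: col5P; rewrite ?mxE ?ht //; nra.
Qed.

Lemma spatial_dot_lt_timelike u w : lor u u < 0 -> lor w w <= 0 -> w tidx 0 != 0 ->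
  spatial_dot u w ^+ 2 < (u tidx 0 * w tidx 0) ^+ 2.
Proof.
rewrite !lorE !subr_lt0 subr_le0 -!expr2 => hu hw hwt.
have := spatial_dot_cauchy_schwarz u w; have := spatial_dot_ge0 u; have := spatial_dot_ge0 w.
have : 0 < w tidx 0 ^+ 2 by rewrite lt_def sqrf_eq0 hwt sqr_ge0.
rewrite exprMn; nra.
Qed.

Lemma spatial_dot_lor0 x y : lor x y = 0 -> spatial_dot x y = x tidx 0 * y tidx 0.
Proof. by rewrite lorE => /eqP; rewrite subr_eq0 => /eqP. Qed.

Lemma ideal_rep_orth_scale v w : ideal_rep v -> ideal_rep w -> lor v w = 0 ->
  w = (w tidx 0 / v tidx 0) *: v.
Proof.
move=> [/spatial_dot_lor0 hv vt0] [/spatial_dot_lor0 hw wt0] /spatial_dot_lor0 hvw.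
set l := w tidx 0 / v tidx 0.
have lv : l * v tidx 0 = w tidx 0 by rewrite /l divfK // lt0r_neq0.
apply/eqP; rewrite -subr_eq0; apply/eqP; apply: spatial_time_eq0; last first.
  by rewrite !mxE lv subrr.
have -> : spatial_dot (w - l *: v) (w - l *: v) =
    spatial_dot w w - 2 * l * spatial_dot v w + l ^+ 2 * spatial_dot v v by rewrite /spatial_dot !mxE; ring.
by rewrite hv hw hvw -lv; ring.
Qed.

Lemma trmx_lorJ : J^T = J.
Proof. by rewrite /lorJ tr_diag_mx. Qed.

Lemma mul_lorJJ : J *m J = 1%:M.
Proof.
apply/matrixP => i j; rewrite {1}/lorJ mul_diag_mx !mxE.
by case: (i == j); case: (i == tidx); rewrite ?mulr1n ?mulr0n ?mulr0 /=; ring.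
Qed.

Lemma lor_mx11 x y : x^T *m J *m y = (lor x y)%:M.
Proof. exact: mx11_scalar. Qed.

Lemma isometry_trmx X : X^T *m J *m X = J -> X *m J *m X^T = J.
Proof.
move=> hX; have JXtJ_X : (J *m X^T *m J) *m X = 1%:M.
  by rewrite -!mulmxA (mulmxA X^T) hX mul_lorJJ.
have -> : X *m J *m X^T = X *m (J *m X^T *m J) *m J.
  by rewrite -!mulmxA mul_lorJJ mulmx1.
by rewrite (mulmx1C JXtJ_X) mul1mx.
Qed.

Lemma isometry_mul X Y : Defs.isometry X -> Defs.isometry Y -> Defs.isometry (X *m Y).
Proof.
move=> [hX pX] [hY pY]; split.
  have -> : (X *m Y)^T *m J *m (X *m Y) = Y^T *m (X^T *m J *m X) *m Y.
    by rewrite trmx_mul !mulmxA.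
  by rewrite hX.
set u : 'cV_5 := (row tidx X)^T; set w := col tidx Y.
have hu : lor u u = -1.
  have := congr1 (fun M : 'M[R]_5 => M tidx tidx) (isometry_trmx hX).
  rewrite lorE /spatial_dot /lorJ mul_mx_diag /= !mxE sum_ord5 !mxE /=; lra.
have hw : lor w w = -1.
  have := congr1 (fun M : 'M[R]_5 => M tidx tidx) hY.
  rewrite lorE /spatial_dot /lorJ mul_mx_diag /= !mxE sum_ord5 !mxE /=; lra.
have -> : (X *m Y) tidx tidx = spatial_dot u w + u tidx 0 * w tidx 0.
  by rewrite /spatial_dot !mxE sum_ord5.
have ut0 : 0 < u tidx 0 by rewrite !mxE.
have wt0 : 0 < w tidx 0 by rewrite !mxE.
have : spatial_dot u w ^+ 2 < (u tidx 0 * w tidx 0) ^+ 2.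
  by apply: spatial_dot_lt_timelike; rewrite ?hu ?hw ?ltrN10 ?lerN10 ?lt0r_neq0.
have := mulr_gt0 ut0 wt0.
set S := spatial_dot u w; set p := u tidx 0 * w tidx 0; nra.
Qed.

Lemma involution_conj b X : involution b -> involution X -> involution (b *m X *m b).
Proof.
move=> [ib [bb _]] [iX [XX X1]]; split; [|split].
- by apply: isometry_mul => //; apply: isometry_mul.
- by rewrite !mulmxA -(mulmxA _ b b) bb mulmx1 -(mulmxA _ X X) XX mulmx1.
move=> bXb1; apply: X1.
have <- : b *m (b *m X *m b) *m b = X.
  by rewrite !mulmxA bb mul1mx -mulmxA bb mulmx1.
by rewrite bXb1 mulmx1 bb.
Qed.



(** * Reflections *)

(* [dyad x y] is the rank-one map [u |-> lor y u *: x]; it is locked so that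
   [mxE] does not unfold the matrix products inside it. *)
Fact dyad_key : unit. Proof. exact: tt. Qed.
Definition dyad x y : 'M[R]_5 := locked_with dyad_key (x *m y^T *m J).

Lemma dyadE x y : dyad x y = x *m y^T *m J.
Proof. by rewrite /dyad; case: dyad_key. Qed.

Lemma dyad_entry x y i j :
  dyad x y i j = x i 0 * y j 0 * (if j == tidx then -1 else 1).
Proof. by rewrite dyadE /lorJ mul_mx_diag !mxE big_ord1 !mxE. Qed.

Lemma dyad_mulv x y u : dyad x y *m u = lor y u *: x.
Proof.
have -> : dyad x y *m u = x *m (y^T *m J *m u) by rewrite dyadE !mulmxA.
by rewrite lor_mx11 mul_mx_scalar.
Qed.

Lemma mul_dyad x y z u : dyad x y *m dyad z u = lor y z *: dyad x u.
Proof.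
rewrite !dyadE !mulmxA.
have -> : x *m y^T *m J *m z = x *m (y^T *m J *m z) by rewrite !mulmxA.
by rewrite lor_mx11 mul_mx_scalar -!scalemxAl.
Qed.

Lemma trmx_dyadJ x y : (dyad x y)^T *m J = J *m dyad y x.
Proof. by rewrite !dyadE !trmx_mul trmxK trmx_lorJ !mulmxA. Qed.

Lemma mxtrace_dyad x y : \tr (dyad x y) = lor y x.
Proof. by rewrite dyadE -mulmxA mxtrace_mulC lor_mx11 mxtrace_scalar mulr1n. Qed.

Lemma reflE x : refl x = 1%:M - 2%:R *: dyad x x.
Proof. by rewrite dyadE. Qed.

Lemma refl_mul x y : refl x *m refl y =
  1%:M - 2%:R *: dyad x x - 2%:R *: dyad y y + (4 * lor x y) *: dyad x y.
Proof.
rewrite !reflE !mulmxBl !mulmxBr !mul1mx !mulmx1 -!scalemxAl -!scalemxAr mul_dyad.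
by apply/matrixP => i j; rewrite !mxE !dyad_entry; ring.
Qed.

Lemma reflK x : lor x x = 1 -> refl x *m refl x = 1%:M.
Proof.
by move=> hx; rewrite refl_mul hx; apply/matrixP => i j; rewrite !mxE !dyad_entry; ring.
Qed.

Lemma reflN x : refl (- x) = refl x.
Proof.
by rewrite !reflE; apply/matrixP => i j; rewrite !mxE !dyad_entry !mxE; ring.
Qed.

Lemma lor_shift_null n v (g : R) : lor n n = 1 -> lor v v = 0 -> lor n v = 0 ->
  lor (n + g *: v) (n + g *: v) = 1.
Proof. by move=> hn hv hnv; rewrite lorDl !lorDr !lorZl !lorZr hn hv hnv lorC hnv; ring. Qed.

Lemma refl_mul_shift n v (a c d : R) : lor n n = 1 -> lor v v = 0 -> lor n v = 0 ->
  refl (n + a *: v) *m refl (n + c *: v) =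
  refl (n + (a + d) *: v) *m refl (n + (c + d) *: v).
Proof.
move=> hn hv hnv; rewrite !refl_mul !lorDl !lorDr !lorZl !lorZr hn hv hnv lorC hnv.
by apply/matrixP => i j; rewrite !mxE !dyad_entry !mxE; ring.
Qed.

Lemma refl_conj b x : b^T *m J *m b = J -> b *m b = 1%:M ->
  b *m refl x *m b = refl (b *m x).
Proof.
move=> hb hbb; have bTJ : b^T *m J = J *m b.
  by rewrite -[LHS]mulmx1 -hbb !mulmxA hb.
rewrite !reflE mulmxBr mulmxBl mulmx1 hbb -scalemxAr -scalemxAl !dyadE.
by rewrite trmx_mul !mulmxA -(mulmxA _ J b) -bTJ !mulmxA.
Qed.

Lemma refl_isometry x : lor x x = 1 -> Defs.isometry (refl x).
Proof.
move=> hx; split.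
  have -> : (refl x)^T *m J = J *m refl x.
    by rewrite reflE linearB /= linearZ /= trmx1 mulmxBl mul1mx -scalemxAl
      trmx_dyadJ mulmxBr mulmx1 -scalemxAr.
  by rewrite -mulmxA reflK // mulmx1.
by rewrite reflE !mxE dyad_entry eqxx /=; nra.
Qed.

Lemma mxtrace_refl_mul x y : lor x x = 1 -> lor y y = 1 ->
  \tr (refl x *m refl y) = 1 + 4 * lor x y ^+ 2.
Proof.
move=> hx hy; rewrite refl_mul !mxtraceD -!scaleN1r !mxtraceZ !mxtrace_dyad.
by rewrite mxtrace1 hx hy (lorC y x) -[5%:R]/(5 : R); ring.
Qed.

(** * Tangent hyperplanes *)

Lemma hpoint_of_timelike x : lor x x < 0 -> exists2 s : R, s != 0 & hpoint (s *: x).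
Proof.
move=> hx; have xt0 : x tidx 0 != 0.
  by apply/eqP => h0; move: hx; rewrite lorE h0 mulr0 subr0 ltNge spatial_dot_ge0.
set r := Num.sqrt (- lor x x).
have r0 : 0 < r by rewrite sqrtr_gt0 oppr_gt0.
have r2 : r ^+ 2 = - lor x x by rewrite sqr_sqrtr // oppr_ge0 ltW.
have unit_s (s : R) : s ^+ 2 = 1 -> lor (s / r *: x) (s / r *: x) = -1.
  move=> hs; rewrite lorZl lorZr mulrA -expr2 exprMn hs mul1r exprVn r2.
  by rewrite invrN mulNr mulVf ?lt_eqF.
case: (ltgtP (x tidx 0) 0) => [xtn | xtp | /eqP]; last by rewrite (negPf xt0).
- exists (-1 / r); first by rewrite mulf_neq0 ?invr_eq0 ?oppr_eq0 ?lt0r_neq0.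
  split; first by apply: unit_s; rewrite sqrrN expr1n.
  by rewrite mxE mulN1r mulNr -mulrN pmulr_rgt0 ?oppr_gt0 ?invr_gt0.
- exists (1 / r); first by rewrite mulf_neq0 ?invr_eq0 ?lt0r_neq0.
  split; first by apply: unit_s; rewrite expr1n.
  by rewrite mxE mul1r mulr_gt0 ?invr_gt0.
Qed.

Lemma hyperplanes_meet n m : lor n n = 1 -> lor m m = 1 -> lor n m ^+ 2 < 1 ->
  exists x, [/\ hpoint x, lor x n = 0 & lor x m = 0].
Proof.
move=> hn hm hc; set c := lor n m in hc.
have hmn : lor m n = c by rewrite lorC.
set D := 1 - c ^+ 2; have D0 : D != 0 by rewrite subr_eq0 eq_sym lt_eqF.
set e : 'cV[R]_5 := delta_mx tidx 0.
have he y : lor e y = - y tidx 0 by rewrite lorE /spatial_dot !mxE /=; ring.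
set p := lor e n; set q := lor e m.
set al := - (p - c * q) / D; set be := - (q - c * p) / D.
(* [x] is the projection of the time axis [e] onto the orthogonal of [n], [m] *)
set x := e + al *: n + be *: m.
have hxn : lor x n = 0.
  by rewrite /x !lorDl !lorZl hn hmn -/p /al /be /D; field; exact: D0.
have hxm : lor x m = 0.
  by rewrite /x !lorDl !lorZl hm -/q -/c /al /be /D; field; exact: D0.
have hxx : lor x x < 0.
  have -> : lor x x = -1 - ((p - c * q) ^+ 2 + D * q ^+ 2) / D.
    rewrite {1}/x !lorDl !lorZl (lorC n) (lorC m) hxn hxm !mulr0 !addr0.
    by rewrite !lorDr !lorZr he mxE /= -/p -/q /al /be /D; field; exact: D0.
  have Dgt0 : 0 < D by rewrite subr_gt0.
  have : 0 <= ((p - c * q) ^+ 2 + D * q ^+ 2) / D.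
    apply: divr_ge0 (ltW Dgt0).
    exact: addr_ge0 (sqr_ge0 _) (mulr_ge0 (ltW Dgt0) (sqr_ge0 _)).
  lra.
have [s s0 hs] := hpoint_of_timelike hxx.
by exists (s *: x); split; rewrite // lorZl ?hxn ?hxm mulr0.
Qed.

Lemma tangent_normal_decomp n m : unit_spacelike n -> unit_spacelike m ->
  tangent_at_infinity n m ->
  exists v (g : R), [/\ ideal_rep v, lor n v = 0, lor n m ^+ 2 = 1 &
                        m = lor n m *: n + g *: v].
Proof.
rewrite /unit_spacelike => hn hm [disj [v [[hv vt0] hvn hvm unique_v]]].
set c := lor n m; set w := m - c *: n.
have hwn : lor w n = 0 by rewrite /w lorBl lorZl hn (lorC m n) mulr1 subrr.
have hwm : lor w m = 1 - c ^+ 2 by rewrite /w lorBl lorZl hm -expr2.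
have hww : lor w w = 1 - c ^+ 2.
  by rewrite {1}/w lorBl lorZl (lorC m) (lorC n) hwm hwn mulr0 subr0.
have hwv : lor w v = 0 by rewrite /w lorBl lorZl (lorC m v) (lorC n v) hvn hvm; ring.
have c2 : c ^+ 2 = 1.
  case: (ltgtP (c ^+ 2) 1) => // hc.
    by have [x [hx hxn hxm]] := hyperplanes_meet hn hm hc; case: (disj x).
  (* [w] would be a timelike vector orthogonal to the null vector [v] *)
  have : spatial_dot w v ^+ 2 < (w tidx 0 * v tidx 0) ^+ 2.
    by apply: spatial_dot_lt_timelike; rewrite ?hww ?hv ?subr_lt0 ?lt0r_neq0.
  by rewrite (spatial_dot_lor0 hwv) ltxx.
have hw0 : lor w w = 0 by rewrite hww c2 subrr.
have hwm0 : lor w m = 0 by rewrite hwm c2 subrr.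
have [g wg] : exists g : R, w = g *: v.
  case: (ltgtP (w tidx 0) 0) => [wtn | wtp | wt0].
  - have [s _ ws] : exists2 s : R, 0 < s & - w = s *: v.
      apply: unique_v; [split | by rewrite lorNl hwn oppr0 | by rewrite lorNl hwm0 oppr0].
        by rewrite lorNl lorC lorNl opprK hw0.
      by rewrite mxE oppr_gt0.
    by exists (- s); rewrite scaleNr -ws opprK.
  - by have [s _ ws] := unique_v w (conj hw0 wtp) hwn hwm0; exists s.
  - exists 0; rewrite scale0r; apply: spatial_time_eq0 => //.
    by move: hw0; rewrite lorE wt0 mulr0 subr0.
by exists v, g; split; [| rewrite lorC | | rewrite -wg /w addrC subrK].
Qed.

Lemma tangent_refl_shift n m : unit_spacelike n -> unit_spacelike m ->
  tangent_at_infinity n m ->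
  exists v (g : R), [/\ ideal_rep v, lor n v = 0 & refl m = refl (n + g *: v)].
Proof.
move=> hn hm tnm; have [v [g [iv hnv]]] := tangent_normal_decomp hn hm tnm.
set c := lor n m => c2 ->; exists v.
have /orP[/eqP-> | /eqP->] : (c == 1) || (c == -1) by rewrite -sqrf_eq1 c2.
  by exists g; rewrite scale1r.
by exists (- g); rewrite -reflN scaleN1r opprD opprK scaleNr.
Qed.

(** * Half-turns *)

(* The half-turn about the geodesic with ideal endpoints [v] and [z]: it fixes
   [v] and [z] and acts as [-1] on their (spacelike) orthogonal complement. *)
Definition halfturn v z : 'M[R]_5 := (2 / lor v z) *: (dyad v z + dyad z v) - 1%:M.

Lemma halfturnC v z : halfturn v z = halfturn z v.
Proof. by rewrite /halfturn lorC (addrC (dyad v z)). Qed.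

Lemma halfturn_mulv v z x :
  halfturn v z *m x = (2 / lor v z) *: (lor z x *: v + lor v x *: z) - x.
Proof. by rewrite /halfturn mulmxBl mul1mx -scalemxAl mulmxDl !dyad_mulv. Qed.

Lemma halfturnK v z : lor v v = 0 -> lor z z = 0 -> lor v z != 0 ->
  halfturn v z *m halfturn v z = 1%:M.
Proof.
move=> hv hz vz0; rewrite /halfturn mulmxBl !mulmxBr !mul1mx !mulmx1.
rewrite -!scalemxAl -!scalemxAr !mulmxDl !mulmxDr !mul_dyad hv hz (lorC z v).
by apply/matrixP => i j; rewrite !mxE !dyad_entry; field.
Qed.

Lemma mxtrace_halfturn v z : lor v z != 0 -> \tr (halfturn v z) = -1.
Proof.
move=> vz0; rewrite /halfturn mxtraceD -scaleN1r !mxtraceZ mxtraceD !mxtrace_dyad.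
by rewrite mxtrace1 (lorC z v) -[5%:R]/(5 : R); field.
Qed.

Lemma halfturn_tt v z : ideal_rep v -> ideal_rep z -> lor v z != 0 ->
  0 < halfturn v z tidx tidx.
Proof.
move=> [hv vt0] [hz zt0] vz0.
have CS := spatial_dot_cauchy_schwarz v z; rewrite (spatial_dot_lor0 hv) (spatial_dot_lor0 hz) in CS.
have LE := lorE v z.
rewrite /halfturn !mxE !dyad_entry eqxx /= mulr1n.
set S := spatial_dot v z in CS LE *; set L := lor v z in vz0 LE *.
set p := v tidx 0 * z tidx 0 in LE *.
have p0 : 0 < p by rewrite mulr_gt0.
(* reverse Cauchy-Schwarz for null vectors: [-2 p <= L <= 0] *)
have CSp : S ^+ 2 <= p ^+ 2 by rewrite /p exprMn !expr2.
have [Sge Sle] : - p <= S /\ S <= p by split; nra.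
have L0 : L < 0 by rewrite lt_neqAle vz0 LE subr_le0.
have -> : 2 / L * (p * -1 + z tidx 0 * v tidx 0 * -1) - 1 = (4 * p + L) / - L.
  by rewrite /p; field.
by rewrite divr_gt0 ?oppr_gt0 //; lra.
Qed.

Lemma halfturn_involution v z : ideal_rep v -> ideal_rep z -> lor v z != 0 ->
  involution (halfturn v z).
Proof.
move=> iv iz vz0; have [[hv _] [hz _]] := (iv, iz).
have htK := halfturnK hv hz vz0.
split; [split | split] => //; last first.
- by move=> ht1; have := mxtrace_halfturn vz0; rewrite ht1 mxtrace1 => /eqP; lra.
- exact: halfturn_tt.
have -> : (halfturn v z)^T *m J = J *m halfturn v z.
  rewrite /halfturn linearB /= linearZ /= linearD /= trmx1 mulmxBl mul1mx.
  rewrite -scalemxAl mulmxDl !trmx_dyadJ mulmxBr mulmx1 -scalemxAr mulmxDr.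
  by rewrite (addrC (J *m dyad z v)).
by rewrite -mulmxA htK mulmx1.
Qed.

Definition negates_mod b v : Prop :=
  b *m v = v /\ forall x, lor x v = 0 -> exists s : R, b *m x = - x + s *: v.

Lemma halfturn_negates_mod v z : lor v v = 0 -> lor v z != 0 ->
  negates_mod (halfturn v z) v.
Proof.
move=> hv vz0; split => [|x hx].
  rewrite halfturn_mulv hv (lorC z v).
  by apply/matrixP => i j; rewrite !mxE; field.
exists (2 / lor v z * lor z x); rewrite halfturn_mulv (lorC v x) hx.
by apply/matrixP => i j; rewrite !mxE; ring.
Qed.

Lemma negates_modZ b v (c : R) : c != 0 -> negates_mod b v ->
  negates_mod b (c *: v).
Proof.
move=> c0 [bv bx]; split => [|x]; first by rewrite -scalemxAr bv.
rewrite lorZr => /eqP; rewrite mulf_eq0 (negPf c0) => /eqP /bx [s ->].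
by exists (s / c); rewrite scalerA divfK.
Qed.

Lemma halfturn_exists v w : ideal_rep v -> ideal_rep w ->
  exists b : 'M[R]_5, [/\ involution b, \tr b = -1, negates_mod b v & negates_mod b w].
Proof.
move=> iv iw; have [[hv vt0] [hw wt0]] := (iv, iw).
have [vw0 | vw0] := eqVneq (lor v w) 0; last first.
  exists (halfturn v w); split; rewrite ?mxtrace_halfturn //.
  - exact: halfturn_involution.
  - exact: halfturn_negates_mod.
  by rewrite halfturnC; apply: halfturn_negates_mod; rewrite // lorC.
(* [w] is a multiple of [v]: use the opposite ideal point as other endpoint *)
set z : 'cV[R]_5 := \col_i (if i == tidx then v i 0 else - v i 0).
have hvv := spatial_dot_lor0 hv.
have hz : lor z z = 0 by rewrite lorE -[RHS]hv lorE /spatial_dot !mxE /=; ring.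
have vz : lor v z = - 2 * v tidx 0 ^+ 2.
  by rewrite lorE; move: hvv; rewrite /spatial_dot !mxE /= => hvv; lra.
have vz0 : lor v z != 0 by rewrite vz mulf_neq0 ?oppr_eq0 ?expf_neq0 ?lt0r_neq0.
have iz : ideal_rep z by split; rewrite // mxE.
exists (halfturn v z); split; rewrite ?mxtrace_halfturn //.
- exact: halfturn_involution.
- exact: halfturn_negates_mod.
rewrite (ideal_rep_orth_scale iv iw vw0); apply: negates_modZ.
  by rewrite mulf_neq0 ?invr_eq0 ?lt0r_neq0.
exact: halfturn_negates_mod.
Qed.

Lemma refl_pair_halfturnK n v (g : R) b :
  lor n n = 1 -> lor v v = 0 -> lor n v = 0 -> involution b -> negates_mod b v ->
  let A := refl n *m refl (n + g *: v) in A *m b *m (A *m b) = 1%:M.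
Proof.
move=> hn hv hnv [[bJ _] [bb _]] [bv bx] A.
set m := n + g *: v.
have hm : lor m m = 1 by exact: lor_shift_null.
have [s bn] := bx n hnv.
have bn' : b *m n = - (n + (- s) *: v).
  by rewrite bn opprD scaleNr opprK.
have bm : b *m m = - (n + (- (s + g)) *: v).
  rewrite /m mulmxDr -scalemxAr bn bv.
  by apply/matrixP => i j; rewrite !mxE; ring.
(* conjugation by [b] reverses the parabolic translation [A] *)
have -> : A *m b *m (A *m b) = A *m (b *m refl n *m b) *m (b *m refl m *m b).
  by rewrite !mulmxA -(mulmxA _ b b) bb mulmx1.
rewrite !refl_conj // bn' bm !reflN -mulmxA (refl_mul_shift _ _ (s + g) hn hv hnv).
rewrite addKr addNr scale0r addr0 -/m mulmxA -(mulmxA (refl n)) reflK // mulmx1.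
exact: reflK.
Qed.

Lemma refl_pair_halfturn_involution n v (g : R) b :
  lor n n = 1 -> lor v v = 0 -> lor n v = 0 -> involution b -> \tr b = -1 ->
  negates_mod b v -> involution (refl n *m refl (n + g *: v) *m b).
Proof.
move=> hn hv hnv ib trb bv; set m := n + g *: v.
have hm : lor m m = 1 by exact: lor_shift_null.
split; [|split].
- apply: isometry_mul; last by case: ib.
  by apply: isometry_mul; apply: refl_isometry.
- exact: refl_pair_halfturnK.
- (* otherwise [b] would be [refl m *m refl n], whose trace is at least [1] *)
  move=> Ab1; have bE : b = refl m *m refl n.
    have inv : refl m *m refl n *m (refl n *m refl m) = 1%:M.
      by rewrite -mulmxA (mulmxA (refl n)) (reflK hn) mul1mx (reflK hm).
    by rewrite -[b]mul1mx -inv -mulmxA Ab1 mulmx1.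
  have := mxtrace_refl_mul hm hn; rewrite -bE trb.
  by have := sqr_ge0 (lor m n); lra.
Qed.

End Lorentz.

Theorem theorem7p2 (R : realType) (A B : 'M[R]_5) :
  pure_parabolic A -> pure_parabolic B -> linked A B.
Proof.
move=> [n [m [hn hm tnm ->]]] [p [q [hp hq tpq ->]]] {A B}.
have [v [g [iv hnv ->]]] := tangent_refl_shift hn hm tnm.
have [w [h [iw hpw ->]]] := tangent_refl_shift hp hq tpq.
have [b [ib trb bv bw]] := halfturn_exists iv iw.
have [_ [bb _]] := ib.
set A := refl n *m refl (n + g *: v); set B := refl p *m refl (p + h *: w).
have iAb : involution (A *m b).
  exact: refl_pair_halfturn_involution hn (proj1 iv) hnv ib trb bv.
have iBb : involution (B *m b).
  exact: refl_pair_halfturn_involution hp (proj1 iw) hpw ib trb bw.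
exists (A *m b), b, (b *m B); split=> //.
- have -> : b *m B = b *m (B *m b) *m b by rewrite -mulmxA -(mulmxA B) bb mulmx1.
  exact: involution_conj.
- by rewrite -mulmxA bb mulmx1.
- by rewrite mulmxA bb mul1mx.
Qed.
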